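(* There is a constant $c$ such that for every basic Boolean formula $\phi$ whose variables are among $v_1,\dots,v_n$ there exists an instruction sequence $X\in\mathrm{IS}^{na}_{br}$ in which the basic instruction $\mathrm{out}.\mathrm{set}{:}F$ does not occur (in any plain, positive test or negative test instruction) such that $X$ computes the $n$-ary Boolean function induced by $\phi$ and $|X|\le c\cdot(\mathrm{size}(\phi)+1)$.
   Context: $\mathbb B=\{T,F\}$. A basic Boolean formula is a propositional formula built from variables $v_1,v_2,\dots$ using only the connectives $\neg,\vee,\wedge$; its size is the number of occurrences of variables and connectives. The $n$-ary Boolean function induced by $\phi$ (variables among $v_1,\dots,v_n$) maps $(b_1,\dots,b_n)$ to $T$ iff $\phi$ is true under $v_j\mapsto b_j$. A primitive instruction is one of: a plain basic instruction $a$, a positive test instruction $+a$, a negative test instruction $-a$ (for a basic instruction $a$), a forward jump instruction $\#l$ ($l\in\mathbb N$), or the termination instruction $!$. An instruction sequence is a finite nonempty sequence $X=u_1;\dots;u_k$ of primitive instructions; its length is $|X|=k$. Basic instructions have the form $f.m$ where the focus $f$ is one of $\mathrm{in}{:}i$, $\mathrm{aux}{:}i$ ($i\ge 1$) or $\mathrm{out}$, each naming a Boolean register, and the method $m$ is one of $\mathrm{set}{:}T$, $\mathrm{set}{:}F$, $\mathrm{get}$. Executing $f.\mathrm{set}{:}b$ sets register $f$ to $b$ and yields reply $b$; executing $f.\mathrm{get}$ leaves the register unchanged and yields its content as reply. Execution of $X=u_1;\dots;u_k$: a counter starts at $1$. If the counter exceeds $k$, execution deadlocks. At position $i$: if $u_i=!$,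 execution terminates; if $u_i=\#l$, execution deadlocks if $l=0$ and otherwise the counter becomes $i+l$; if $u_i$ is $a$, $+a$ or $-a$, the basic instruction $a$ is executed yielding reply $r$, and the counter becomes $i+1$ for $u_i=a$; for $u_i=+a$ it becomes $i+1$ if $r=T$ and $i+2$ if $r=F$; for $u_i=-a$ it becomes $i+1$ if $r=F$ and $i+2$ if $r=T$. $\mathrm{IS}_{br}$ is the set of instruction sequences in which every basic instruction occurring belongs to $\{f.\mathrm{get}: f=\mathrm{in}{:}i \text{ or } f=\mathrm{aux}{:}i\}\cup\{f.\mathrm{set}{:}b: f=\mathrm{aux}{:}i \text{ or } f=\mathrm{out},\ b\in\mathbb B\}$. $\mathrm{IS}^{na}_{br}\subseteq \mathrm{IS}_{br}$ is the set of those in which every basic instruction belongs to $\{\mathrm{in}{:}i.\mathrm{get}: i\ge1\}\cup\{\mathrm{out}.\mathrm{set}{:}T,\mathrm{out}.\mathrm{set}{:}F\}$. $X\in\mathrm{IS}_{br}$ computes $f:\mathbb B^n\to\mathbb B$ if for every $(b_1,\dots,b_n)\in\mathbb B^n$: when $X$ is executed with register $\mathrm{in}{:}j$ initialised to $b_j$ ($j\le n$) and all registers $\mathrm{aux}{:}i$ and $\mathrm{out}$ initialised to $F$, execution terminates (does not deadlock) without ever executing a basic instruction with focus $\mathrm{in}{:}j$ for $j>n$, and at termination register $\mathrm{out}$ contains $f(b_1,\dots,b_n)$. *)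

(* Boolean values: true = T, false = F. *)
From Stdlib Require Import Arith List Bool.
Import ListNotations.

Inductive formula : Type :=
| FVar : nat -> formula            (* FVar i is v_i, i >= 1 *)
| FNeg : formula -> formula
| FOr  : formula -> formula -> formula
| FAnd : formula -> formula -> formula.

Fixpoint fsize (p : formula) : nat :=
  match p with
  | FVar _ => 1
  | FNeg q => S (fsize q)
  | FOr q r => S (fsize q + fsize r)
  | FAnd q r => S (fsize q + fsize r)
  end.

Fixpoint vars_among (n : nat) (p : formula) : Prop :=
  match p with
  | FVar i => 1 <= i /\ i <= n
  | FNeg q => vars_among n q
  | FOr q r => vars_among n q /\ vars_among n r
  | FAnd q r => vars_among n q /\ vars_among n r
  end.

Fixpoint feval (v : nat -> bool) (p : formula) : bool :=
  match p with
  | FVar i => v i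
  | FNeg q => negb (feval v q)
  | FOr q r => feval v q || feval v r
  | FAnd q r => feval v q && feval v r
  end.

(* the n-ary Boolean function induced by p, on inputs (b_1,...,b_n) given as a
   list of length n: v_j |-> b_j = nth (j-1) bs *)
Definition induced (p : formula) (bs : list bool) : bool :=
  feval (fun j => nth (j - 1) bs false) p.

Inductive focus : Type := FIn (i : nat) | FAux (i : nat) | FOut.
Inductive method : Type := MSet (b : bool) | MGet.
Record basic : Type := BI { bfocus : focus; bmethod : method }.

Inductive instr : Type :=
| IPlain : basic -> instr
| IPos   : basic -> instr
| INeg   : basic -> instr
| IJump  : nat -> instr
| ITerm  : instr.

Definition state := focus -> bool.

Definition focus_eqb (f g : focus) : bool :=
  match f, g with
  | FIn i, FIn j => Nat.eqb i j
  | FAux i, FAux j => Nat.eqb i j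
  | FOut, FOut => true
  | _, _ => false
  end.

Definition exec_basic (a : basic) (s : state) : state * bool :=
  match bmethod a with
  | MSet b => (fun g => if focus_eqb g (bfocus a) then b else s g, b)
  | MGet => (s, s (bfocus a))
  end.

Inductive outcome : Type :=
| Terminated : state -> outcome
| Deadlock : outcome
| Violation : outcome.   (* a basic instruction with focus in:j, j > n, was executed *)

Definition forbidden (n : nat) (a : basic) : bool :=
  match bfocus a with FIn j => Nat.ltb n j | _ => false end.

(* run X with input arity n, fuel, counter pc, state s;
   None = out of fuel *)
Fixpoint run (X : list instr) (n fuel pc : nat) (s : state) : option outcome :=
  match fuel with
  | 0 => None
  | S f =>
    if (pc =? 0) || (length X <? pc) then Some Deadlock else
    match nth (pc - 1) X ITerm with
    | ITerm => Some (Terminated s)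
    | IJump 0 => Some Deadlock
    | IJump l => run X n f (pc + l) s
    | IPlain a => if forbidden n a then Some Violation else
        let (s', _) := exec_basic a s in run X n f (pc + 1) s'
    | IPos a => if forbidden n a then Some Violation else
        let (s', r) := exec_basic a s in
        run X n f (if r then pc + 1 else pc + 2) s'
    | INeg a => if forbidden n a then Some Violation else
        let (s', r) := exec_basic a s in
        run X n f (if r then pc + 2 else pc + 1) s'
    end
  end.

Definition init_state (bs : list bool) : state :=
  fun g => match g with
           | FIn j => if (1 <=? j) && (j <=? length bs) then nth (j - 1) bs false else false
           | _ => false
           end.

Definition instr_basics (u : instr) : list basic :=
  match u with
  | IPlain a | IPos a | INeg a => [a]
  | _ => []
  end.

Definition br_basic (a : basic) : Prop :=
  match bfocus a, bmethod a with
  | FIn i, MGet => 1 <= i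
  | FAux i, _ => 1 <= i
  | FOut, MSet _ => True
  | _, _ => False
  end.

Definition na_basic (a : basic) : Prop :=
  match bfocus a, bmethod a with
  | FIn i, MGet => 1 <= i
  | FOut, MSet _ => True
  | _, _ => False
  end.

Definition is_seq (X : list instr) : Prop := X <> [].

Definition IS_br (X : list instr) : Prop :=
  is_seq X /\ forall u a, In u X -> In a (instr_basics u) -> br_basic a.

Definition IS_na_br (X : list instr) : Prop :=
  is_seq X /\ forall u a, In u X -> In a (instr_basics u) -> na_basic a.

Definition no_out_setF (X : list instr) : Prop :=
  forall u, In u X -> ~ In (BI FOut (MSet false)) (instr_basics u).

Definition computes (X : list instr) (n : nat) (f : list bool -> bool) : Prop :=
  forall bs : list bool, length bs = n ->
    exists fuel s, run X n fuel 1 (init_state bs) = Some (Terminated s)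
                   /\ s FOut = f bs.

From Stdlib Require Import Arith List Lia Bool.
Import ListNotations.

(* A formula phi is compiled into a segment [compile phi] that
   evaluates phi by branching only: it consists of positive tests +in:i.get
   and forward jumps, and is entered at its first instruction.  When phi is
   true, control leaves the segment just past its last instruction; when phi
   is false, one instruction further.  Negation swaps these two exits with
   two jumps, and conjunction/disjunction short-circuit to the second operand
   or to the appropriate exit, so each connective costs two instructions and
   |compile phi| <= 3 size(phi).  The program is then
   compile phi ; out.set:T ; !, where the false exit lands on ! and leaves
   out at its initial value F. *)

(* Branching code for a formula: true exits at the end, false one past it. *)
Fixpoint compile (p : formula) : list instr :=
  match p with
  | FVar i => [IPos (BI (FIn i) MGet)]
  | FNeg q => compile q ++ [IJump 3; IJump 1]
  | FAnd q r => compile q ++ [IJump 2; IJump (length (compile r) + 2)] ++ compile r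
  | FOr q r => compile q ++ [IJump (length (compile r) + 2); IJump 1] ++ compile r
  end.

Section Execution.

Variables (X : list instr) (n : nat).

Definition fetch_at (pc : nat) (u : instr) : Prop :=
  1 <= pc <= length X /\ nth (pc - 1) X ITerm = u.

Definition occurs_at (pc : nat) (C : list instr) : Prop :=
  exists pre post, X = pre ++ C ++ post /\ pc = length pre + 1.

Lemma occurs_at_whole : occurs_at 1 X.
Proof. exists [], []. rewrite app_nil_r. auto. Qed.

Lemma occurs_at_app_l pc C D : occurs_at pc (C ++ D) -> occurs_at pc C.
Proof.
  intros (pre & post & HX & ->). exists pre, (D ++ post).
  rewrite HX, <- app_assoc. auto.
Qed.

Lemma occurs_at_app_r pc C D : occurs_at pc (C ++ D) -> occurs_at (pc + length C) D.
Proof.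
  intros (pre & post & HX & ->). exists (pre ++ C), post.
  rewrite HX, <- !app_assoc, length_app. split; [reflexivity | lia].
Qed.

Lemma occurs_at_fetch pc u C : occurs_at pc (u :: C) -> fetch_at pc u.
Proof.
  intros (pre & post & HX & ->). split; rewrite HX.
  - rewrite length_app. simpl. lia.
  - rewrite Nat.add_sub. apply nth_middle.
Qed.

Lemma run_S f pc s :
  1 <= pc <= length X ->
  run X n (S f) pc s =
    match nth (pc - 1) X ITerm with
    | ITerm => Some (Terminated s)
    | IJump 0 => Some Deadlock
    | IJump l => run X n f (pc + l) s
    | IPlain a => if forbidden n a then Some Violation else
        let (s', _) := exec_basic a s in run X n f (pc + 1) s'
    | IPos a => if forbidden n a then Some Violation else
        let (s', r) := exec_basic a s in
        run X n f (if r then pc + 1 else pc + 2) s'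
    | INeg a => if forbidden n a then Some Violation else
        let (s', r) := exec_basic a s in
        run X n f (if r then pc + 2 else pc + 1) s'
    end.
Proof.
  intros Hpc. cbn [run].
  replace (pc =? 0) with false by (symmetry; apply Nat.eqb_neq; lia).
  replace (length X <? pc) with false by (symmetry; apply Nat.ltb_ge; lia).
  reflexivity.
Qed.

Lemma run_term f pc s : fetch_at pc ITerm -> run X n (S f) pc s = Some (Terminated s).
Proof. intros [Hpc Hu]. rewrite run_S, Hu by exact Hpc. reflexivity. Qed.

Lemma run_set_out f pc s :
  fetch_at pc (IPlain (BI FOut (MSet true))) ->
  run X n (S f) pc s = run X n f (pc + 1) (fun g => if focus_eqb g FOut then true else s g).
Proof. intros [Hpc Hu]. rewrite run_S, Hu by exact Hpc. reflexivity. Qed.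

Definition leads (s : state) (pc pc' : nat) : Prop :=
  exists k, forall f, run X n (k + f) pc s = run X n f pc' s.

Lemma leads_trans s pc1 pc2 pc3 : leads s pc1 pc2 -> leads s pc2 pc3 -> leads s pc1 pc3.
Proof.
  intros [k1 H1] [k2 H2]. exists (k1 + k2). intros f.
  rewrite <- Nat.add_assoc, H1. apply H2.
Qed.

Lemma leads_jump s pc l pc' :
  fetch_at pc (IJump l) -> l <> 0 -> pc' = pc + l -> leads s pc pc'.
Proof.
  intros [Hpc Hu] Hl ->. exists 1. intros f. change (1 + f) with (S f).
  rewrite (run_S f pc s Hpc), Hu. destruct l; [contradiction | reflexivity].
Qed.

Lemma leads_test s pc i :
  fetch_at pc (IPos (BI (FIn i) MGet)) -> i <= n ->
  leads s pc (if s (FIn i) then pc + 1 else pc + 2).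
Proof.
  intros [Hpc Hu] Hi. exists 1. intros f. change (1 + f) with (S f).
  rewrite (run_S f pc s Hpc), Hu. unfold forbidden, exec_basic. cbn [bfocus bmethod].
  replace (n <? i) with false by (symmetry; apply Nat.ltb_ge; lia).
  reflexivity.
Qed.

Variables (s : state) (v : nat -> bool).
Hypothesis s_inputs : forall i, 1 <= i <= n -> s (FIn i) = v i.

(* The exit position is
   a parameter so that the induction can name waypoints freely. *)
Lemma compile_correct phi :
  vars_among n phi -> forall pc exit, occurs_at pc (compile phi) ->
  exit = pc + length (compile phi) + (if feval v phi then 0 else 1) ->
  leads s pc exit.
Proof.
  induction phi as [i | q IHq | q IHq r IHr | q IHq r IHr];
    intros Hv pc exit Hocc Hexit; cbn [compile feval vars_among] in *.
  -
    replace exit with (if s (FIn i) then pc + 1 else pc + 2)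
      by (rewrite s_inputs by lia; destruct (v i); cbn in Hexit; lia).
    apply leads_test; [exact (occurs_at_fetch _ _ _ Hocc) | lia].
  - (* not q: the two jumps exchange the exits of q *)
    pose proof (occurs_at_app_l _ _ _ Hocc) as Hocc_q.
    pose proof (occurs_at_app_r _ _ _ Hocc) as Hjumps.
    pose proof (occurs_at_fetch _ _ _ Hjumps) as Hj3.
    pose proof (occurs_at_fetch _ _ _ (occurs_at_app_r _ [_] _ Hjumps)) as Hj1.
    rewrite length_app in Hexit. cbn [length] in *.
    destruct (feval v q); cbn [negb] in Hexit.
    + apply leads_trans with (pc + length (compile q)).
      * apply (IHq Hv pc _ Hocc_q). lia.
      * apply (leads_jump s _ 3 _ Hj3); lia.
    + apply leads_trans with (pc + length (compile q) + 1).
      * apply (IHq Hv pc _ Hocc_q). lia.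
      * apply (leads_jump s _ 1 _ Hj1); lia.
  - (* q or r: a true q jumps to the true exit, a false q falls into r *)
    destruct Hv as [Hvq Hvr].
    pose proof (occurs_at_app_l _ _ _ Hocc) as Hocc_q.
    pose proof (occurs_at_app_r _ _ _ Hocc) as Hrest.
    pose proof (occurs_at_fetch _ _ _ Hrest) as Hjtrue.
    pose proof (occurs_at_fetch _ _ _ (occurs_at_app_r _ [_] _ Hrest)) as Hjfalse.
    pose proof (occurs_at_app_r _ [_; _] _ Hrest) as Hocc_r.
    rewrite !length_app in Hexit. cbn [length] in *.
    destruct (feval v q); cbn [orb] in Hexit.
    + apply leads_trans with (pc + length (compile q)).
      * apply (IHq Hvq pc _ Hocc_q). lia.
      * apply (leads_jump s _ _ _ Hjtrue); lia.
    + apply leads_trans with (pc + length (compile q) + 2).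
      * apply leads_trans with (pc + length (compile q) + 1).
        -- apply (IHq Hvq pc _ Hocc_q). lia.
        -- apply (leads_jump s _ 1 _ Hjfalse); lia.
      * apply (IHr Hvr _ _ Hocc_r). lia.
  - (* q and r: a true q falls into r, a false q jumps to the false exit *)
    destruct Hv as [Hvq Hvr].
    pose proof (occurs_at_app_l _ _ _ Hocc) as Hocc_q.
    pose proof (occurs_at_app_r _ _ _ Hocc) as Hrest.
    pose proof (occurs_at_fetch _ _ _ Hrest) as Hjtrue.
    pose proof (occurs_at_fetch _ _ _ (occurs_at_app_r _ [_] _ Hrest)) as Hjfalse.
    pose proof (occurs_at_app_r _ [_; _] _ Hrest) as Hocc_r.
    rewrite !length_app in Hexit. cbn [length] in *.
    destruct (feval v q); cbn [andb] in Hexit.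
    + apply leads_trans with (pc + length (compile q) + 2).
      * apply leads_trans with (pc + length (compile q)).
        -- apply (IHq Hvq pc _ Hocc_q). lia.
        -- apply (leads_jump s _ 2 _ Hjtrue); lia.
      * apply (IHr Hvr _ _ Hocc_r). lia.
    + apply leads_trans with (pc + length (compile q) + 1).
      * apply (IHq Hvq pc _ Hocc_q). lia.
      * apply (leads_jump s _ _ _ Hjfalse); lia.
Qed.

End Execution.

Definition na_instr (u : instr) : Prop :=
  forall a, In a (instr_basics u) -> na_basic a /\ a <> BI FOut (MSet false).

Lemma na_program X : X <> [] -> Forall na_instr X -> IS_na_br X /\ no_out_setF X.
Proof.
  intros Hne HX. rewrite Forall_forall in HX. repeat split.
  - exact Hne.
  - intros u a Hu Ha. apply (HX u Hu _ Ha).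
  - intros u Hu Ha. apply (HX u Hu _ Ha). reflexivity.
Qed.

Lemma compile_na n phi : vars_among n phi -> Forall na_instr (compile phi).
Proof.
  assert (jumps_na : forall l l', Forall na_instr [IJump l; IJump l'])
    by (intros l l'; constructor; [intros a [] | constructor; [intros a [] | constructor]]).
  induction phi as [i | q IHq | q IHq r IHr | q IHq r IHr]; cbn [compile vars_among];
    intros Hv; rewrite ?Forall_app; intuition auto.
  constructor; [| constructor].
  intros a [<- | []]. split; [cbn; lia | discriminate].
Qed.

(* Each connective costs two jumps and each variable one test. *)
Lemma compile_length phi : length (compile phi) <= 3 * fsize phi.
Proof.
  induction phi; cbn [compile fsize]; rewrite ?length_app; cbn [length]; lia.
Qed.

Definition program (phi : formula) : list instr :=
  compile phi ++ [IPlain (BI FOut (MSet true)); ITerm].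

Lemma program_na n phi :
  vars_among n phi -> IS_na_br (program phi) /\ no_out_setF (program phi).
Proof.
  intros Hv. apply na_program.
  - unfold program. destruct (compile phi); discriminate.
  - apply Forall_app. split; [exact (compile_na n phi Hv) |].
    constructor; [| constructor; [intros a [] | constructor]].
    intros a [<- | []]. split; [exact I | discriminate].
Qed.

Lemma program_length phi : length (program phi) <= 3 * (fsize phi + 1).
Proof.
  unfold program. rewrite length_app. pose proof (compile_length phi). cbn [length]. lia.
Qed.

Lemma init_state_inputs bs i :
  1 <= i <= length bs -> init_state bs (FIn i) = nth (i - 1) bs false.
Proof.
  intros Hi. unfold init_state.
  replace ((1 <=? i) && (i <=? length bs)) with true; [reflexivity |].
  symmetry. apply andb_true_iff. split; apply Nat.leb_le; lia.
Qed.

(* Correctness: the true exit runs out.set:T then !, the false exit runs !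
   directly, so at termination out holds the value of phi. *)
Lemma program_computes n phi : vars_among n phi -> computes (program phi) n (induced phi).
Proof.
  intros Hv bs Hbs. unfold induced.
  set (v := fun j => nth (j - 1) bs false).
  set (P := program phi).
  pose proof (occurs_at_whole P) as Hocc.
  pose proof (occurs_at_app_r _ _ _ _ Hocc) as Htail.
  pose proof (occurs_at_fetch _ _ _ _ Htail) as Hset.
  pose proof (occurs_at_fetch _ _ _ _ (occurs_at_app_r _ _ [_] _ Htail)) as Hterm.
  cbn [length] in Hterm.
  assert (Hs : forall i, 1 <= i <= n -> init_state bs (FIn i) = v i)
    by (intros i Hi; apply init_state_inputs; lia).
  destruct (compile_correct P n (init_state bs) v Hs phi Hv 1 _ (occurs_at_app_l _ _ _ _ Hocc)
              eq_refl) as [k Hk].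
  destruct (feval v phi).
  - exists (k + 2). rewrite Hk, Nat.add_0_r.
    rewrite (run_set_out _ _ 1 _ _ Hset), (run_term _ _ 0 _ _ Hterm).
    eexists. split; reflexivity.
  - exists (k + 1). rewrite Hk, (run_term _ _ 0 _ _ Hterm).
    eexists. split; reflexivity.
Qed.

Theorem theorem2 :
  exists c : nat,
    forall (n : nat) (phi : formula),
      vars_among n phi ->
      exists X : list instr,
        IS_na_br X /\ no_out_setF X /\
        computes X n (induced phi) /\
        length X <= c * (fsize phi + 1).
Proof.
  exists 3. intros n phi Hv. exists (program phi).
  destruct (program_na n phi Hv) as [Hna Hno_setF].
  split; [exact Hna |]. split; [exact Hno_setF |]. split.
  - exact (program_computes n phi Hv).
  - apply program_length.
Qed.
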